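(* Let $k\geq 3$ and let $G$ be the cubic graph on $n=6k$ vertices $a_j,b_j,c_j,d_j,e_j,f_j$ ($j=1,\dots,k$) with edges $a_jb_j,\ a_jc_j,\ b_jd_j,\ b_je_j,\ c_jd_j,\ c_je_j,\ d_jf_j,\ e_jf_j$ for each $j$, and $f_ja_{j+1}$ for each $j$ (indices modulo $k$, so $f_k a_1$ is an edge). Then $Z(G)=M(G)=n/3+2$.
   Context: For a graph $G$ on vertices $w_1,\dots,w_n$, $S(G)$ is the set of real symmetric $n\times n$ matrices $A$ such that for $s\neq t$, $a_{st}\neq 0$ if and only if $w_s$ and $w_t$ are adjacent (diagonal entries arbitrary); the maximum nullity $M(G)$ is the maximum nullity of a matrix in $S(G)$. Zero forcing: color each vertex black or white; if a black vertex has exactly one white neighbor, that neighbor is recolored black. A set $Z$ is a zero forcing set if starting with exactly $Z$ black and applying this rule repeatedly makes all vertices black; $Z(G)$ is the minimum size of a zero forcing set. *)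

From HB Require Import structures.
From mathcomp Require Import all_boot all_order all_algebra.
From mathcomp Require Import reals.
Set Implicit Arguments. Unset Strict Implicit. Unset Printing Implicit Defensive.
Import Order.TTheory GRing.Theory Num.Theory.

Definition in_SG (R : realType) (n : nat) (adj : rel 'I_n) (A : 'M[R]_n) : Prop :=
  (A^T)%R = A /\ (forall s t : 'I_n, s != t -> ((A s t != 0)%R = adj s t)).

Definition nullity (R : realType) (n : nat) (A : 'M[R]_n) : nat := n - \rank A.

Definition max_nullity_is (R : realType) (n : nat) (adj : rel 'I_n) (m : nat) : Prop :=
  (exists A : 'M[R]_n, in_SG adj A /\ nullity A = m) /\
  (forall A : 'M[R]_n, in_SG adj A -> nullity A <= m).

(** One (simultaneous) round of the zero forcing color-change rule:
    every black vertex with exactly one white neighbor forces it. Since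
    forcing only enlarges the black set, iterating this yields exactly the
    final black set obtained by applying the rule repeatedly. *)
Definition force_step (n : nat) (adj : rel 'I_n) (B : {set 'I_n}) : {set 'I_n} :=
  B :|: [set w | [exists v in B,
           adj v w && (w \notin B) && (#|[set u | adj v u & u \notin B]| == 1)]].

Definition force_closure (n : nat) (adj : rel 'I_n) (Z : {set 'I_n}) : {set 'I_n} :=
  iter n (force_step adj) Z.

Definition zero_forcing_set (n : nat) (adj : rel 'I_n) (Z : {set 'I_n}) : bool :=
  force_closure adj Z == [set: 'I_n].

(** Z(G): minimum size of a zero forcing set (the full vertex set is one). *)
Definition zero_forcing_number (n : nat) (adj : rel 'I_n) : nat :=
  \big[minn/n]_(Z : {set 'I_n} | zero_forcing_set adj Z) #|Z|.

(** The cubic graph of the statement on 6k vertices: vertex 6*j + t is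
    a_j,b_j,c_j,d_j,e_j,f_j for t = 0,1,2,3,4,5 respectively (j = 0..k-1). *)
Definition block_edge (t u : nat) : bool :=
  (t, u) \in [:: (0,1); (0,2); (1,3); (1,4); (2,3); (2,4); (3,5); (4,5)]%N.

Definition chain_adj (k : nat) : rel 'I_(6 * k) := fun v w =>
  let jv := (v %/ 6)%N in let tv := (v %% 6)%N in
  let jw := (w %/ 6)%N in let tw := (w %% 6)%N in
  [|| (jv == jw) && (block_edge tv tw || block_edge tw tv),
      [&& tv == 5, tw == 0 & jw == (jv + 1) %% k]%N
    | [&& tw == 5, tv == 0 & jv == (jw + 1) %% k]%N].

From HB Require Import structures.
From mathcomp Require Import all_boot all_order all_algebra.
From mathcomp Require Import reals zify.
Set Implicit Arguments. Unset Strict Implicit. Unset Printing Implicit Defensive.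
Import Order.TTheory GRing.Theory.

(** M(G) <= Z(G) holds for every graph: a null vector of a matrix of S(G)
    that vanishes on a zero forcing set vanishes everywhere, since in the
    row of a black vertex with a single white neighbour w the matrix
    equation only involves the entry at w.  In the chain graph the vertices
    b_j, d_j together with a and c of the first block form a zero forcing
    set of size 2k + 2 that forces the blocks one after the other.
    Conversely the adjacency matrix has rank at most 4k - 2: the rows of
    b_j and c_j coincide, so do those of d_j and e_j, and the telescoping
    relations sum_j (row d_j - row a_j) = 0 = sum_j (row f_j - row b_j)
    cut two more dimensions. *)

Lemma iter_extensive_fix (T : finType) (f : {set T} -> {set T}) (Z : {set T}) :
  (forall B : {set T}, B \subset f B) -> f (iter #|T| f Z) = iter #|T| f Z.
Proof.
move=> f_ext.
suff [//|fullC] : f (iter #|T| f Z) = iter #|T| f Z \/ #|T| <= #|iter #|T| f Z|.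
  have -> : iter #|T| f Z = setT by apply/eqP; rewrite eqEcard subsetT cardsT.
  by apply/eqP; rewrite eqEsubset subsetT f_ext.
elim: #|T| => [|m IH]; first by right.
have [fixm|nfix] := eqVneq (f (iter m f Z)) (iter m f Z).
  by left; rewrite /= fixm fixm.
right; case: IH => [fixm|le_m]; first by rewrite fixm eqxx in nfix.
by apply: leq_ltn_trans le_m (proper_card _); rewrite properEneq eq_sym nfix f_ext.
Qed.

Section RowVectors.
Local Open Scope ring_scope.

Lemma sum_delta_mx_uniq (R : nzRingType) n (s : seq 'I_n) : uniq s ->
  \sum_(u <- s) 'e_u = \row_w (w \in s)%:R :> 'rV[R]_n.
Proof.
move=> s_uniq; apply/rowP => w; rewrite summxE !mxE -(count_uniq_mem w s_uniq).
rewrite -sum1_count natr_sum [RHS]big_mkcond /=; apply: eq_bigr => u _.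
by rewrite mxE eqxx eq_sym; case: eqP.
Qed.

Lemma row_sub_matrix (F : fieldType) m n (g : nat -> 'rV[F]_n) j :
  (j < m)%N -> (g j <= \matrix_(i < m) g i)%MS.
Proof. by move=> jm; rewrite -(rowK (fun i : 'I_m => g i) (Ordinal jm)) row_sub. Qed.

End RowVectors.

Section ZeroForcing.
Variables (n : nat) (adj : rel 'I_n).

Lemma sub_force_step (B : {set 'I_n}) : B \subset force_step adj B.
Proof. exact: subsetUl. Qed.

Lemma force_closure_fix (Z : {set 'I_n}) :
  force_step adj (force_closure adj Z) = force_closure adj Z.
Proof. by have := iter_extensive_fix Z sub_force_step; rewrite card_ord. Qed.

Lemma sub_force_closure (Z : {set 'I_n}) : Z \subset force_closure adj Z.
Proof.
suff iter_sub m : Z \subset iter m (force_step adj) Z by apply: iter_sub.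
by elim: m => //= m IH; apply: subset_trans IH (sub_force_step _).
Qed.

Lemma force_stepP (B : {set 'I_n}) v w : v \in B -> adj v w ->
  (forall u, adj v u -> u != w -> u \in B) -> w \in force_step adj B.
Proof.
move=> vB avw blackN; rewrite inE; case wB: (w \in B) => //=.
rewrite inE; apply/existsP; exists v; rewrite vB avw wB /=.
apply/cards1P; exists w; apply/setP => u; rewrite !inE.
case: (eqVneq u w) => [->|uw]; first by rewrite avw wB.
by case avu: (adj v u) => //=; rewrite (blackN u avu uw).
Qed.

Lemma force_closure_closed (Z : {set 'I_n}) v w :
  v \in force_closure adj Z -> adj v w ->
  (forall u, adj v u -> u != w -> u \in force_closure adj Z) ->
  w \in force_closure adj Z.
Proof. by rewrite -{3}force_closure_fix; apply: force_stepP. Qed.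

Lemma zero_forcing_number_le (Z : {set 'I_n}) :
  zero_forcing_set adj Z -> zero_forcing_number adj <= #|Z|.
Proof.
by move=> ZF; rewrite /zero_forcing_number -minEnat -leEnat; exact: bigmin_le_cond.
Qed.

Variable R : realType.
Local Open Scope ring_scope.

Lemma force_step_kernel (A : 'M[R]_n) (x : 'rV[R]_n) (B : {set 'I_n}) :
  in_SG adj A -> x *m A = 0 -> {in B, forall v, x 0 v = 0} ->
  {in force_step adj B, forall w, x 0 w = 0}.
Proof.
move=> [symA patA] xA xB w; rewrite inE => /orP [/xB //|].
rewrite inE => /existsP [v /andP [vB /andP [/andP [avw wB] /cards1P [w' Nv]]]].
have white u : adj v u -> u \notin B -> u = w.
  have inNv y : adj v y -> y \notin B -> y = w'.
    by move=> avy yB; apply/set1P; rewrite -Nv inE avy.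
  by move=> avu uB; rewrite (inNv u avu uB) (inNv w avw wB).
have Asym u : A u v = A v u by rewrite -{1}symA mxE.
have vw : v != w by apply: contraNneq wB => <-.
have := congr1 (fun y : 'rV_n => y 0 v) xA; rewrite !mxE (bigD1 w) //= big1 ?addr0.
  move/eqP; rewrite mulf_eq0 Asym => /orP [/eqP //|/eqP Avw].
  by move: (patA v w vw); rewrite Avw eqxx avw.
move=> u uw; case uB: (u \in B); first by rewrite xB ?mul0r.
have vu : v != u by apply: contraFneq uB => <-.
rewrite Asym; case avu: (adj v u); first by rewrite (white u avu) ?uB ?eqxx in uw.
by move: (patA v u vu); rewrite avu => /negbFE/eqP ->; rewrite mulr0.
Qed.

Lemma zero_forcing_kernel (A : 'M[R]_n) (Z : {set 'I_n}) (x : 'rV[R]_n) :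
  in_SG adj A -> zero_forcing_set adj Z -> x *m A = 0 ->
  {in Z, forall v, x 0 v = 0} -> x = 0.
Proof.
move=> SA /eqP ZF xA xZ; apply/rowP => v; rewrite mxE.
have: v \in force_closure adj Z by rewrite ZF inE.
suff iter_ker m : {in iter m (force_step adj) Z, forall v, x 0 v = 0} by apply: iter_ker.
by elim: m => //= m IH; apply: force_step_kernel SA xA IH.
Qed.

Lemma nullity_le_zero_forcing_set (A : 'M[R]_n) (Z : {set 'I_n}) :
  in_SG adj A -> zero_forcing_set adj Z -> (nullity A <= #|Z|)%N.
Proof.
move=> SA ZF; rewrite /nullity -mxrank_ker.
pose P : 'M[R]_(n, #|Z|) := \matrix_(i, j) (i == enum_val j)%:R.
rewrite -(mxrank_mul_ker _ P).
suff /eqP -> : (kermx A :&: kermx P)%MS == 0 by rewrite mxrank0 addn0 rank_leq_col.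
apply/rowV0P => x; rewrite sub_capmx !sub_kermx => /andP [/eqP xA /eqP xP].
apply: (zero_forcing_kernel SA ZF xA) => z zZ.
have := congr1 (fun y : 'rV_#|Z| => y 0 (enum_rank_in zZ z)) xP.
rewrite !mxE (bigD1 z) //= big1 => [|u uz]; rewrite mxE enum_rankK_in //.
  by rewrite eqxx mulr1 addr0.
by rewrite (negbTE uz) mulr0.
Qed.

Lemma nullity_le_zero_forcing_number (A : 'M[R]_n) :
  in_SG adj A -> (nullity A <= zero_forcing_number adj)%N.
Proof.
move=> SA; rewrite /zero_forcing_number -minEnat -leEnat.
apply: le_bigmin => [|Z ZF]; rewrite leEnat; first exact: leq_subr.
exact: nullity_le_zero_forcing_set.
Qed.

End ZeroForcing.

Section ChainGraph.
Variable k : nat.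
Hypothesis k_gt0 : 0 < k.

Fact six_k_gt0 : 0 < 6 * k. Proof. by rewrite muln_gt0. Qed.

Definition vert (j t : nat) : 'I_(6 * k) := Ordinal (ltn_pmod (6 * j + t) six_k_gt0).
Definition vblock (v : 'I_(6 * k)) : nat := v %/ 6.
Definition vlabel (v : 'I_(6 * k)) : nat := v %% 6.
Definition bsucc (j : nat) : nat := (j + 1) %% k.
Definition bpred (j : nat) : nat := (j + k.-1) %% k.

Lemma vblock_lt v : vblock v < k.
Proof. by have := ltn_ord v; rewrite /vblock; lia. Qed.

Lemma vlabel_lt v : vlabel v < 6.
Proof. by rewrite /vlabel; lia. Qed.

Lemma val_vert j t : j < k -> t < 6 -> val (vert j t) = 6 * j + t.
Proof. by move=> jk t6 /=; rewrite modn_small //; lia. Qed.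

Lemma vblock_vert j t : j < k -> t < 6 -> vblock (vert j t) = j.
Proof. by move=> jk t6; rewrite /vblock val_vert //; lia. Qed.

Lemma vlabel_vert j t : j < k -> t < 6 -> vlabel (vert j t) = t.
Proof. by move=> jk t6; rewrite /vlabel val_vert //; lia. Qed.

Lemma vertE v : v = vert (vblock v) (vlabel v).
Proof. by apply: val_inj; rewrite val_vert ?vblock_lt ?vlabel_lt //= /vblock /vlabel; lia. Qed.

Lemma eq_vert j t j' t' : j < k -> t < 6 -> j' < k -> t' < 6 ->
  (vert j t == vert j' t') = (j == j') && (t == t').
Proof. by move=> *; rewrite -val_eqE !val_vert //; apply/eqP/andP; lia. Qed.

Lemma bsucc_lt j : bsucc j < k. Proof. exact: ltn_pmod. Qed.
Lemma bpred_lt j : bpred j < k. Proof. exact: ltn_pmod. Qed.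

Lemma bsuccE j : j < k -> bsucc j = if j.+1 == k then 0 else j.+1.
Proof.
move=> jk; rewrite /bsucc addn1; case: eqP => [->|ne]; first exact: modnn.
by rewrite modn_small //; lia.
Qed.

Lemma bpredE j : j < k -> bpred j = if j == 0 then k.-1 else j.-1.
Proof.
move=> jk; rewrite /bpred; case: eqP => [->|ne]; first by rewrite modn_small //; lia.
have -> : j + k.-1 = j.-1 + k by lia.
by rewrite modnDr modn_small //; lia.
Qed.

Lemma bsuccS j : j.+1 < k -> bsucc j = j.+1.
Proof. by move=> jk; rewrite bsuccE ?ifN_eq //; lia. Qed.

Lemma bpredS j : j.+1 < k -> bpred j.+1 = j.
Proof. by move=> jk; rewrite bpredE. Qed.

Lemma eq_bsucc j j' : j < k -> j' < k -> (j == bsucc j') = (j' == bpred j).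
Proof.
move=> jk j'k; rewrite bsuccE // bpredE //.
by case: (eqVneq j'.+1 k) => ?; case: (eqVneq j 0) => ?; apply/eqP/eqP; lia.
Qed.

Definition nbrs (j t : nat) : seq 'I_(6 * k) :=
  match t with
  | 0 => [:: vert j 1; vert j 2; vert (bpred j) 5]
  | 1 | 2 => [:: vert j 0; vert j 3; vert j 4]
  | 3 | 4 => [:: vert j 1; vert j 2; vert j 5]
  | _ => [:: vert j 3; vert j 4; vert (bsucc j) 0]
  end.

Lemma chain_adj_vert j t j' t' : j < k -> t < 6 -> j' < k -> t' < 6 ->
  chain_adj (vert j t) (vert j' t') = (vert j' t' \in nbrs j t).
Proof.
move=> jk t6 j'k t'6.
rewrite /chain_adj -!/(vblock _) -!/(vlabel _) -!/(bsucc _) !vblock_vert ?vlabel_vert //.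
rewrite (eq_sym j).
do 6?[case: t t6 => [|t] t6 //]; rewrite /nbrs !inE !eq_vert ?bsucc_lt ?bpred_lt //;
  do 6?[case: t' t'6 => [|t'] t'6 //]; rewrite /= ?andbT ?andbF ?orbF ?eq_bsucc //.
Qed.

Lemma chain_adj_nbrs j t w : j < k -> t < 6 -> chain_adj (vert j t) w = (w \in nbrs j t).
Proof. by move=> jk t6; rewrite [w]vertE chain_adj_vert ?vblock_lt ?vlabel_lt. Qed.

Lemma chain_adj_sym (v w : 'I_(6 * k)) : chain_adj v w = chain_adj w v.
Proof.
rewrite /chain_adj; move: (v %/ 6) (w %/ 6) (v %% 6) (w %% 6) => a b c d.
by rewrite (eq_sym a b) (orbC (block_edge c d)) (orbC [&& c == 5, d == 0 & _]).
Qed.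

Lemma uniq_nbrs j t : j < k -> t < 6 -> uniq (nbrs j t).
Proof.
move=> jk t6; do 6?[case: t t6 => [|t] t6 //].
all: by rewrite /= !inE !eq_vert ?bsucc_lt ?bpred_lt ?andbF.
Qed.

Definition chain_forcing_set : {set 'I_(6 * k)} :=
  [set vert j 1 | j : 'I_k] :|: [set vert j 3 | j : 'I_k] :|: [set vert 0 0; vert 0 2].

Lemma card_chain_forcing_set : #|chain_forcing_set| <= 2 * k + 2.
Proof.
have card_lbl t : #|[set vert j t | j : 'I_k]| <= k.
  by rewrite -[leqRHS]card_ord leq_imset_card.
rewrite /chain_forcing_set; apply: leq_trans (leq_card_setU _ _) _.
apply: leq_add; last by rewrite cards2; case: (_ != _).
by apply: leq_trans (leq_card_setU _ _) _; rewrite mul2n -addnn leq_add.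
Qed.

Let closure := force_closure (@chain_adj k) chain_forcing_set.

Lemma chain_force j t x y w : j < k -> t < 6 -> nbrs j t =i [:: x; y; w] ->
  vert j t \in closure -> x \in closure -> y \in closure -> w \in closure.
Proof.
move=> jk t6 Nv vC xC yC; apply: (force_closure_closed vC) => [|u].
  by rewrite chain_adj_nbrs // Nv !inE eqxx !orbT.
by rewrite chain_adj_nbrs // Nv !inE => /or3P [] /eqP ->; rewrite ?eqxx.
Qed.

Lemma chain_forcing_closure j t : j < k -> t \in [:: 1; 3] -> vert j t \in closure.
Proof.
rewrite !inE => jk /orP [] /eqP ->; apply: (subsetP (sub_force_closure _ _)); rewrite !inE.
  by rewrite (imset_f (fun i : 'I_k => vert i 1) (x := Ordinal jk)).
by rewrite (imset_f (fun i : 'I_k => vert i 3) (x := Ordinal jk)) ?orbT.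
Qed.

Lemma chain_forcing_closure0 t : t \in [:: 0; 2] -> vert 0 t \in closure.
Proof.
by rewrite !inE => /orP [] /eqP ->; apply: (subsetP (sub_force_closure _ _));
  rewrite !inE eqxx ?orbT.
Qed.

Lemma chain_closure_block0 t : t < 6 -> vert 0 t \in closure.
Proof.
have a0 := chain_forcing_closure0 (t := 0) isT.
have c0 := chain_forcing_closure0 (t := 2) isT.
have b0 := chain_forcing_closure k_gt0 (t := 1) isT.
have d0 := chain_forcing_closure k_gt0 (t := 3) isT.
have e0 : vert 0 4 \in closure by apply: (chain_force k_gt0 (t := 1) isT _ b0 a0 d0).
have f0 : vert 0 5 \in closure by apply: (chain_force k_gt0 (t := 3) isT _ d0 b0 c0).
by case: t => [|[|[|[|[|[|//]]]]]].
Qed.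

Lemma chain_closure_blockS j : j.+1 < k ->
  (forall t, t < 6 -> vert j t \in closure) -> forall t, t < 6 -> vert j.+1 t \in closure.
Proof.
move=> jk prev; have jk' : j < k by lia.
have b := chain_forcing_closure jk (t := 1) isT.
have d := chain_forcing_closure jk (t := 3) isT.
have a : vert j.+1 0 \in closure.
  apply: (chain_force jk' (t := 5) isT _ (prev 5 isT) (prev 3 isT) (prev 4 isT)).
  by move=> u; rewrite /= bsuccS.
have c : vert j.+1 2 \in closure.
  apply: (chain_force jk (t := 0) isT _ a b (prev 5 isT)).
  by move=> u; rewrite /= bpredS // !inE [_ || (u == vert j 5)]orbC.
have e : vert j.+1 4 \in closure by apply: (chain_force jk (t := 2) isT _ c a d).
have f : vert j.+1 5 \in closure by apply: (chain_force jk (t := 3) isT _ d b c).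
by case=> [|[|[|[|[|[|//]]]]]].
Qed.

Lemma chain_forcing_set_zero_forcing : zero_forcing_set (@chain_adj k) chain_forcing_set.
Proof.
rewrite /zero_forcing_set eqEsubset subsetT; apply/subsetP => v _; rewrite [v]vertE.
suff blocks j : j < k -> forall t, t < 6 -> vert j t \in closure.
  exact: blocks (vblock_lt v) _ (vlabel_lt v).
elim: j => [_|j IH jk]; first exact: chain_closure_block0.
exact: chain_closure_blockS jk (IH (ltnW jk)).
Qed.

Variable R : realType.
Local Open Scope ring_scope.

Definition chain_mx : 'M[R]_(6 * k) := \matrix_(v, w) (chain_adj v w)%:R.

Lemma chain_mx_SG : in_SG (@chain_adj k) chain_mx.
Proof.
split; first by apply/matrixP => v w; rewrite !mxE chain_adj_sym.
by move=> v w _; rewrite mxE; case: (chain_adj v w); rewrite ?oner_neq0 ?eqxx.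
Qed.

Lemma row_chain_mx j t : (j < k)%N -> (t < 6)%N ->
  row (vert j t) chain_mx = \sum_(u <- nbrs j t) 'e_u.
Proof.
move=> jk t6; rewrite sum_delta_mx_uniq ?uniq_nbrs //.
by apply/rowP => w; rewrite !mxE chain_adj_nbrs.
Qed.

(** With beta_j = e_(b_j) + e_(c_j) and delta_j = e_(d_j) + e_(e_j), the rows
    of [chain_mx] are beta_j + e_(f_(j-1)) (for a_j), e_(a_j) + delta_j (b_j, c_j),
    beta_j + e_(f_j) (d_j, e_j) and delta_j + e_(a_(j+1)) (f_j).  Shifting the
    f- and delta-parts by those of the last block gives a spanning family in
    which [gen_f] and [gen_de] vanish at j = k - 1. *)
Definition gen_bc j : 'rV[R]_(6 * k) := 'e_(vert j 1) + 'e_(vert j 2) + 'e_(vert k.-1 5).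
Definition gen_f j : 'rV[R]_(6 * k) := 'e_(vert j 5) - 'e_(vert k.-1 5).
Definition gen_a j : 'rV[R]_(6 * k) := 'e_(vert j 0) + ('e_(vert k.-1 3) + 'e_(vert k.-1 4)).
Definition gen_de j : 'rV[R]_(6 * k) :=
  'e_(vert j 3) + 'e_(vert j 4) - ('e_(vert k.-1 3) + 'e_(vert k.-1 4)).

Definition chain_row_space : 'M[R]_(6 * k) :=
  (\matrix_(j < k) gen_bc j + \matrix_(j < k) gen_a j +
   \matrix_(j < k.-1) gen_f j + \matrix_(j < k.-1) gen_de j)%MS.

Lemma rank_chain_row_space : (\rank chain_row_space <= 4 * k - 2)%N.
Proof.
have rank_adds m1 m2 (A : 'M[R]_(m1, 6 * k)) (B : 'M[R]_(m2, 6 * k)) :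
  (\rank (A + B)%MS <= \rank A + \rank B)%N := (mxrank_adds_leqif A B).1.
rewrite /chain_row_space; set X1 := \matrix_(j < k) _; set X2 := \matrix_(j < k) _.
set X3 := \matrix_(j < k.-1) _; set X4 := \matrix_(j < k.-1) _.
have := rank_adds _ _ X1 X2; have := rank_adds _ _ (X1 + X2)%MS X3.
have := rank_adds _ _ (X1 + X2 + X3)%MS X4.
have := rank_leq_row X1; have := rank_leq_row X2.
have := rank_leq_row X3; have := rank_leq_row X4; lia.
Qed.

Lemma gens_sub_chain_row_space j : (j < k)%N ->
  [/\ gen_bc j <= chain_row_space, gen_a j <= chain_row_space,
      gen_f j <= chain_row_space & gen_de j <= chain_row_space]%MS.
Proof.
move=> jk; have := submx_refl chain_row_space.
rewrite {1}/chain_row_space !addsmx_sub => /andP [/andP [/andP [bcS aS] fS] deS].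
have last0 g : ~~ (j < k.-1)%N -> g j - g k.-1 = 0 :> 'rV[R]_(6 * k).
  by move=> jl; rewrite (_ : j = k.-1) ?subrr //; lia.
split; [exact: submx_trans (row_sub_matrix _ jk) bcS
       | exact: submx_trans (row_sub_matrix _ jk) aS | |].
- have [jl|jl] := boolP (j < k.-1)%N; first exact: submx_trans (row_sub_matrix _ jl) fS.
  by rewrite /gen_f (last0 (fun i => 'e_(vert i 5))) ?sub0mx.
- have [jl|jl] := boolP (j < k.-1)%N; first exact: submx_trans (row_sub_matrix _ jl) deS.
  by rewrite /gen_de (last0 (fun i => 'e_(vert i 3) + 'e_(vert i 4))) ?sub0mx.
Qed.

Lemma chain_mx_sub : (chain_mx <= chain_row_space)%MS.
Proof.
apply/row_subP => v; rewrite [v]vertE row_chain_mx ?vblock_lt ?vlabel_lt //.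
move: (vblock v) (vlabel v) (vblock_lt v) (vlabel_lt v) => j t jk t6.
have [bc_j a_j f_j de_j] := gens_sub_chain_row_space jk.
have [_ _ f_p _] := gens_sub_chain_row_space (bpred_lt j).
have [_ a_s _ _] := gens_sub_chain_row_space (bsucc_lt j).
have row_bcf p : 'e_(vert j 1) + 'e_(vert j 2) + 'e_(vert p 5) = gen_bc j + gen_f p.
  by rewrite addrACA subrr addr0.
have row_ade : 'e_(vert j 0) + 'e_(vert j 3) + 'e_(vert j 4) = gen_a j + gen_de j.
  by rewrite addrACA subrr addr0 addrA.
have row_dea s : 'e_(vert j 3) + 'e_(vert j 4) + 'e_(vert s 0) = gen_de j + gen_a s.
  by rewrite addrACA addNr addr0.
case: t t6 => [|[|[|[|[|[|//]]]]]] _; rewrite !big_cons big_nil addr0 addrA.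
all: by rewrite ?row_bcf ?row_ade ?row_dea addmx_sub.
Qed.

Lemma nullity_chain_mx : (2 * k + 2 <= nullity chain_mx)%N.
Proof.
rewrite /nullity; have := mxrankS chain_mx_sub; have := rank_chain_row_space; lia.
Qed.

End ChainGraph.

Theorem mainTheorem10 (R : realType) (k : nat) (hk : (3 <= k)%N) :
  zero_forcing_number (@chain_adj k) = ((6 * k) %/ 3 + 2)%N /\
  max_nullity_is R (@chain_adj k) ((6 * k) %/ 3 + 2)%N.
Proof.
have k_gt0 : 0 < k by lia.
have -> : 6 * k %/ 3 + 2 = 2 * k + 2 by lia.
have Z_le : zero_forcing_number (@chain_adj k) <= 2 * k + 2.
  apply: leq_trans (card_chain_forcing_set k_gt0).
  exact: zero_forcing_number_le (chain_forcing_set_zero_forcing k_gt0).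
have M_le := @nullity_le_zero_forcing_number _ (@chain_adj k) R.
have M_ge := leq_trans (nullity_chain_mx k_gt0 R) (M_le _ (chain_mx_SG k R)).
have Z_eq : zero_forcing_number (@chain_adj k) = 2 * k + 2.
  by apply/eqP; rewrite eqn_leq Z_le.
split; first exact: Z_eq.
split; last by move=> A /M_le; rewrite Z_eq.
exists (chain_mx k R); split; first exact: chain_mx_SG.
by apply/eqP; rewrite eqn_leq nullity_chain_mx // -Z_eq (M_le _ (chain_mx_SG k R)).
Qed.
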